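(* Let $\varepsilon>0$ and $q\in(0,1)$, and fix real numbers $\sigma$ and $\tau$. Then there exist constants $C>0$ and $V_0>0$, depending only on $\varepsilon$, $q$, $\sigma$ and $\tau$, such that for every real $v$ with $|v|\ge V_0$ and every complex $t$ with $\Re(t)=\tau$ satisfying $\inf_{r\in\mathbb{Z}_{\ge 0}}|1-q^{t+r}|>\varepsilon$, writing $s=\sigma+iv$, we have $$|\zeta_q(s,t)|\le \begin{cases} C & (\tau>0),\\ C\,|v| & (\tau=0),\\ C\exp\left(-\tau(1+\pi/2)\,|v|\right) & (\tau<0).\end{cases}$$
   Context: For $q\in(0,1)$ and a positive integer $m$, the $q$-integer is $[m]_q=\frac{1-q^m}{1-q}$, and $q^{w}=e^{w\log q}$ for complex $w$. The $q$-analogue of the Riemann zeta function (Kaneko–Kurokawa–Wakayama) is $\zeta_q(s,t)=\sum_{m=1}^\infty \frac{q^{mt}}{[m]_q^s}$, which converges absolutely for $s\in\mathbb{C}$, $\Re(t)>0$, and extends meromorphically to $\mathbb{C}^2$; its poles are simple and lie at $t\in\{a+2\pi i b/\log q : a,b\in\mathbb{Z},\ a\le 0\}$. For $\Re(t)\le 0$, $\zeta_q(s,t)$ denotes this meromorphic continuation (the hypothesis $\inf_{r\ge0}|1-q^{t+r}|>\varepsilon$ excludes the poles). *)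

From Stdlib Require Import Reals.
From Coquelicot Require Import Coquelicot.
Open Scope R_scope.

Definition cexp (z : C) : C :=
  (exp (Re z) * cos (Im z), exp (Re z) * sin (Im z)).

Definition qpow (q : R) (w : C) : C := cexp (RtoC (ln q) * w)%C.

Definition qint (q : R) (m : nat) : R := (1 - q ^ m) / (1 - q).

Definition rpow_neg (x : R) (s : C) : C := cexp (- (RtoC (ln x) * s))%C.

Definition CSeries (a : nat -> C) : C :=
  (Series (fun n => Re (a n)), Series (fun n => Im (a n))).

(* Dirichlet series  sum_{m>=1} q^{m t} / [m]_q^s  (absolutely convergent
   for Re t > 0). *)
Definition zeta_q_dirichlet (q : R) (s t : C) : C :=
  CSeries (fun n => (qpow q (RtoC (INR (S n)) * t) * rpow_neg (qint q (S n)) s)%C).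

(* Generalized binomial coefficient binom(s+r-1, r) = s(s+1)...(s+r-1)/r!. *)
Fixpoint gbinom (s : C) (r : nat) : C :=
  match r with
  | O => 1%C
  | S r' => (gbinom s r' * (s + RtoC (INR r')) / RtoC (INR r' + 1))%C
  end.

(* Meromorphic continuation (Kaneko-Kurokawa-Wakayama):
   zeta_q(s,t) = (1-q)^s sum_{r>=0} binom(s+r-1,r) q^{t+r}/(1-q^{t+r}),
   valid for all (s,t) off the poles (q^{t+r} <> 1). *)
Definition zeta_q_cont (q : R) (s t : C) : C :=
  (cexp (s * RtoC (ln (1 - q))) *
   CSeries (fun r => gbinom s r * qpow q (t + RtoC (INR r))
                       / (1 - qpow q (t + RtoC (INR r)))))%C.

Definition zeta_q (q : R) (s t : C) : C :=
  match Rlt_dec 0 (Re t) with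
  | left _ => zeta_q_dirichlet q s t
  | right _ => zeta_q_cont q s t
  end.

(* For Re t > 0 the Dirichlet series is dominated by a geometric series: since
   1 <= [m]_q <= 1/(1-q), the factor |[m]_q^(-s)| is bounded independently of Im s.

   For Re t <= 0 put y_r = q^(t+r) in the continuation and peel off layers with
   y/(1-y) = y + y^2/(1-y).  The k-th layer is q^(kt) F_s(q^k), where
   F_s(x) = sum_r binom(s+r-1,r) x^r; by Vandermonde's convolution |F_s(x)|^2 = F_(s+conj s)(x),
   a series at the real exponent 2 Re s, so every layer is O(|q^t|^k) uniformly in Im s.
   After M ~ log |s| / log (1/q) layers the remainder, whose denominators stay above eps, is
   dominated by a geometric series.  Hence |zeta_q(s,t)| << log |s| * |s|^(-Re t), which
   yields all three bounds. *)

From Stdlib Require Import Reals Lra Lia.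
From Coquelicot Require Import Coquelicot.
Open Scope R_scope.

Lemma exp_le_exp (x y : R) : x <= y -> exp x <= exp y.
Proof.
  intros [Hlt | ->]; [left; apply exp_increasing; exact Hlt | apply Rle_refl].
Qed.

Lemma ln_neg_of_lt1 (x : R) : 0 < x < 1 -> ln x < 0.
Proof. intros Hx. rewrite <- ln_1. apply ln_increasing; lra. Qed.

Lemma pow_exp_ln (x : R) (n : nat) : 0 < x -> x ^ n = exp (INR n * ln x).
Proof. intros Hx. rewrite <- Rpower_pow by exact Hx. reflexivity. Qed.

Lemma affine_le_exp (c1 c2 T w : R) :
  0 < T -> 0 <= c1 -> 0 <= c2 -> 0 <= w ->
  c1 + c2 * w <= (c1 + c2 / T) * exp (T * w).
Proof.
  intros HT Hc1 Hc2 Hw.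
  pose proof (exp_ineq1_le (T * w)) as Hexp.
  assert (Hc2T : 0 <= c2 / T) by (apply Rdiv_le_0_compat; lra).
  apply Rle_trans with ((c1 + c2 / T) * (1 + T * w)).
  - replace ((c1 + c2 / T) * (1 + T * w)) with (c1 + c2 * w + c1 * T * w + c2 / T)
      by (field; lra).
    assert (0 <= c1 * T * w) by (apply Rmult_le_pos; [apply Rmult_le_pos|]; lra).
    lra.
  - apply Rmult_le_compat_l; lra.
Qed.

Lemma im_le_Cmod (c : C) : Rabs (Im c) <= Cmod c.
Proof.
  rewrite <- (Rabs_pos_eq (Cmod c)) by apply Cmod_ge_0.
  apply Rsqr_le_abs_0. unfold Rsqr.
  pose proof (Cmod2_alt c). pose proof (pow2_ge_0 (Re c)). simpl in *. nra.
Qed.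

Lemma Cmod_le_Re_Im (c : C) : Cmod c <= Rabs (Re c) + Rabs (Im c).
Proof.
  pose proof (Rabs_pos (Re c)). pose proof (Rabs_pos (Im c)).
  rewrite <- (Rabs_pos_eq (Cmod c)) by apply Cmod_ge_0.
  rewrite <- (Rabs_pos_eq (Rabs (Re c) + Rabs (Im c))) by lra.
  apply Rsqr_le_abs_0. unfold Rsqr.
  pose proof (Cmod2_alt c) as H2. rewrite <- (pow2_abs (Re c)), <- (pow2_abs (Im c)) in H2.
  simpl in H2. nra.
Qed.

Lemma cexp_add (a b : C) : cexp (a + b) = (cexp a * cexp b)%C.
Proof.
  destruct a as [a1 a2], b as [b1 b2]. unfold cexp, Cmult, Cplus; simpl.
  rewrite exp_plus, cos_plus, sin_plus.
  apply injective_projections; simpl; ring.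
Qed.

Lemma cexp_RtoC (x : R) : cexp (RtoC x) = RtoC (exp x).
Proof.
  unfold cexp, RtoC; simpl. rewrite cos_0, sin_0.
  apply injective_projections; simpl; ring.
Qed.

Lemma Cmod_cexp (z : C) : Cmod (cexp z) = exp (Re z).
Proof.
  destruct z as [a b]. unfold cexp, Cmod; simpl.
  replace (exp a * cos b * (exp a * cos b * 1) + exp a * sin b * (exp a * sin b * 1))
    with (exp a ^ 2) by (pose proof (sin2_cos2 b); unfold Rsqr in *; simpl; nra).
  apply sqrt_pow2. left; apply exp_pos.
Qed.

Lemma Re_RtoC_mul (x : R) (w : C) : Re (RtoC x * w) = x * Re w.
Proof. destruct w; unfold Cmult, RtoC; simpl; ring. Qed.

Lemma Re_mul_RtoC (z : C) (x : R) : Re (z * RtoC x) = Re z * x.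
Proof. destruct z; unfold Cmult, RtoC; simpl; ring. Qed.

Lemma Im_mul_RtoC (z : C) (x : R) : Im (z * RtoC x) = Im z * x.
Proof. destruct z; unfold Cmult, RtoC; simpl; ring. Qed.

Lemma RtoC_neq0 (x : R) : x <> 0 -> RtoC x <> 0%C.
Proof. intros Hx E. apply (f_equal Re) in E. simpl in E. auto. Qed.

Lemma Cmod_qpow (q : R) (w : C) : Cmod (qpow q w) = exp (ln q * Re w).
Proof. unfold qpow. rewrite Cmod_cexp, Re_RtoC_mul. reflexivity. Qed.

Lemma qpow_add_nat (q : R) (t : C) (r : nat) :
  0 < q -> qpow q (t + RtoC (INR r)) = (qpow q t * RtoC (q ^ r))%C.
Proof.
  intros Hq. unfold qpow.
  replace (RtoC (ln q) * (t + RtoC (INR r)))%C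
    with (RtoC (ln q) * t + RtoC (INR r * ln q))%C by (rewrite RtoC_mult; ring).
  rewrite cexp_add, cexp_RtoC, pow_exp_ln by exact Hq. reflexivity.
Qed.

(** * Componentwise complex series *)

Lemma Rabs_Series_le (a b : nat -> R) :
  (forall n, Rabs (a n) <= b n) -> ex_series b -> Rabs (Series a) <= Series b.
Proof.
  intros Hab Hb.
  assert (Ha : ex_series (fun n => Rabs (a n))).
  { apply (ex_series_le (fun n => Rabs (a n)) b); auto. intros n. apply Rle_trans with (2 := Hab n). right. apply Rabs_Rabsolu. }
  eapply Rle_trans; [apply Series_Rabs, Ha|].
  apply Series_le; auto. intros n. split; [apply Rabs_pos | apply Hab].
Qed.

Lemma Series_scal_geom (c x : R) :
  0 <= x < 1 -> Series (fun n => c * x ^ n) = c / (1 - x).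
Proof.
  intros Hx. rewrite Series_scal_l, Series_geom by (rewrite Rabs_pos_eq; lra).
  reflexivity.
Qed.

Lemma ex_series_scal_geom (c x : R) : 0 <= x < 1 -> ex_series (fun n => c * x ^ n).
Proof.
  intros Hx. apply (ex_series_scal_l c (fun n => x ^ n)).
  apply ex_series_geom. rewrite Rabs_pos_eq; lra.
Qed.

Lemma ex_series_ratio_le (u : nat -> R) (rho : R) (N : nat) :
  0 <= rho < 1 -> (forall n, 0 <= u n) ->
  (forall n, (N <= n)%nat -> u (S n) <= rho * u n) -> ex_series u.
Proof.
  intros Hrho Hu Hratio.
  assert (Hgeom : forall k, u (N + k)%nat <= u N * rho ^ k).
  { induction k as [|k IH].
    - rewrite Nat.add_0_r. simpl. lra.
    - replace (N + S k)%nat with (S (N + k)) by lia.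
      eapply Rle_trans; [apply Hratio; lia|]. simpl.
      replace (u N * (rho * rho ^ k)) with (rho * (u N * rho ^ k)) by ring.
      apply Rmult_le_compat_l; lra. }
  apply (ex_series_incr_n u N).
  apply (ex_series_le (fun k => u (N + k)%nat) (fun k => u N * rho ^ k));
    [|apply ex_series_scal_geom; lra].
  intros k. apply Rle_trans with (2 := Hgeom k). right. apply Rabs_pos_eq, Hu.
Qed.

Lemma CSeries_ext (f g : nat -> C) : (forall n, f n = g n) -> CSeries f = CSeries g.
Proof.
  intros H. unfold CSeries. f_equal; apply Series_ext; intros n; rewrite H; reflexivity.
Qed.

Lemma ex_series_Re (f : nat -> C) :
  ex_series (fun n => Cmod (f n)) -> ex_series (fun n => Re (f n)).
Proof. apply (ex_series_le (fun n => Re (f n))). intros n. apply re_le_Cmod. Qed.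

Lemma ex_series_Im (f : nat -> C) :
  ex_series (fun n => Cmod (f n)) -> ex_series (fun n => Im (f n)).
Proof. apply (ex_series_le (fun n => Im (f n))). intros n. apply im_le_Cmod. Qed.

Lemma CSeries_plus (f g : nat -> C) :
  ex_series (fun n => Cmod (f n)) -> ex_series (fun n => Cmod (g n)) ->
  CSeries (fun n => f n + g n)%C = (CSeries f + CSeries g)%C.
Proof.
  intros Hf Hg. unfold CSeries, Cplus; simpl.
  rewrite <- (Series_plus _ _ (ex_series_Re _ Hf) (ex_series_Re _ Hg)).
  rewrite <- (Series_plus _ _ (ex_series_Im _ Hf) (ex_series_Im _ Hg)).
  reflexivity.
Qed.

Lemma CSeries_scal_l (c : C) (f : nat -> C) :
  ex_series (fun n => Cmod (f n)) ->
  CSeries (fun n => c * f n)%C = (c * CSeries f)%C.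
Proof.
  intros Hf. unfold CSeries, Cmult; simpl.
  pose proof (ex_series_scal_l (fst c) _ (ex_series_Re _ Hf)).
  pose proof (ex_series_scal_l (snd c) _ (ex_series_Re _ Hf)).
  pose proof (ex_series_scal_l (fst c) _ (ex_series_Im _ Hf)).
  pose proof (ex_series_scal_l (snd c) _ (ex_series_Im _ Hf)).
  rewrite <- !Series_scal_l, <- Series_minus, <- Series_plus by assumption.
  reflexivity.
Qed.

(* CSeries sums real and imaginary parts separately, hence the factor 2. *)
Lemma Cmod_CSeries_le (f : nat -> C) (b : nat -> R) :
  (forall n, Cmod (f n) <= b n) -> ex_series b -> Cmod (CSeries f) <= 2 * Series b.
Proof.
  intros Hfb Hb. eapply Rle_trans; [apply Cmod_le_Re_Im|]. unfold CSeries; simpl.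
  assert (Hre : Rabs (Series (fun n => Re (f n))) <= Series b).
  { apply Rabs_Series_le; auto. intros n. eapply Rle_trans; [apply re_le_Cmod | apply Hfb]. }
  assert (Him : Rabs (Series (fun n => Im (f n))) <= Series b).
  { apply Rabs_Series_le; auto. intros n. eapply Rle_trans; [apply im_le_Cmod | apply Hfb]. }
  lra.
Qed.

Lemma ex_series_Cmod_scal_l (c : C) (f : nat -> C) :
  ex_series (fun n => Cmod (f n)) -> ex_series (fun n => Cmod (c * f n)).
Proof.
  intros Hf. apply (ex_series_ext (fun n => Cmod c * Cmod (f n))).
  - intros n. symmetry. apply Cmod_mult.
  - apply (ex_series_scal_l (Cmod c) (fun n => Cmod (f n))), Hf.
Qed.

(** * Generalized binomial coefficients *)

Fixpoint gbinomR (a : R) (r : nat) : R :=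
  match r with
  | O => 1
  | S r' => gbinomR a r' * (a + INR r') / (INR r' + 1)
  end.

Lemma gbinomR_ge0 (a : R) (r : nat) : 0 <= a -> 0 <= gbinomR a r.
Proof.
  intros Ha. induction r as [|r IH]; simpl; [lra|].
  pose proof (pos_INR r).
  apply Rdiv_le_0_compat; [apply Rmult_le_pos|]; lra.
Qed.

Lemma Cmod_gbinom_le (s : C) (r : nat) : Cmod (gbinom s r) <= gbinomR (Cmod s) r.
Proof.
  induction r as [|r IH]; simpl.
  - rewrite Cmod_1. lra.
  - pose proof (pos_INR r).
    rewrite Cmod_div by (apply RtoC_neq0; lra).
    rewrite Cmod_mult, Cmod_R, Rabs_pos_eq by lra.
    apply Rmult_le_compat_r; [left; apply Rinv_0_lt_compat; lra|].
    apply Rmult_le_compat; try apply Cmod_ge_0; auto.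
    eapply Rle_trans; [apply Cmod_triangle|]. rewrite Cmod_R, Rabs_pos_eq by lra. lra.
Qed.

Lemma gbinomR_pow_S_le (a x rho : R) (n : nat) :
  0 <= a -> 0 <= x -> (a + INR n) * x <= rho * (INR n + 1) ->
  gbinomR a (S n) * x ^ S n <= rho * (gbinomR a n * x ^ n).
Proof.
  intros Ha Hx Hratio. pose proof (pos_INR n).
  assert (Hu : 0 <= gbinomR a n * x ^ n)
    by (apply Rmult_le_pos; [apply gbinomR_ge0 | apply pow_le]; lra).
  replace (gbinomR a (S n) * x ^ S n)
    with ((gbinomR a n * x ^ n) * ((a + INR n) * x / (INR n + 1))) by (simpl; field; lra).
  rewrite (Rmult_comm rho). apply Rmult_le_compat_l; [exact Hu|].
  apply Rle_div_l; lra.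
Qed.

Lemma gbinomR_pow_le_half_pow (a x : R) (r : nat) :
  0 <= a -> 0 <= x -> x * (a + 1) <= 1 / 2 -> gbinomR a r * x ^ r <= (1 / 2) ^ r.
Proof.
  intros Ha Hx Hax. induction r as [|r IH]; [simpl; lra|].
  eapply Rle_trans.
  - apply (gbinomR_pow_S_le a x (1 / 2)); auto. pose proof (pos_INR r). nra.
  - simpl. apply Rmult_le_compat_l; lra.
Qed.

Lemma ex_series_gbinomR (a x : R) :
  0 <= a -> 0 <= x < 1 -> ex_series (fun r => gbinomR a r * x ^ r).
Proof.
  intros Ha Hx.
  set (rho := (1 + x) / 2).
  destruct (INR_unbounded (a * x / (rho - x))) as [N HN].
  assert (HaxN : a * x < INR N * (rho - x)) by (apply Rlt_div_l; [unfold rho|]; lra).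
  apply (ex_series_ratio_le _ rho N); [unfold rho; lra| |].
  - intros n. apply Rmult_le_pos; [apply gbinomR_ge0 | apply pow_le]; lra.
  - intros n Hn. apply gbinomR_pow_S_le; try lra.
    apply le_INR in Hn. assert (rho - x > 0) by (unfold rho; lra). nra.
Qed.

Lemma sum_n_shift {G : AbelianMonoid} (a : nat -> G) (n : nat) :
  sum_n a (S n) = plus (a O) (sum_n (fun k => a (S k)) n).
Proof. unfold sum_n. rewrite sum_Sn_m, <- sum_n_m_S by lia. reflexivity. Qed.

Lemma sum_n_Cmult_l (c : C) (f : nat -> C) (n : nat) :
  sum_n (fun k => c * f k)%C n = (c * sum_n f n)%C.
Proof. exact (@sum_n_mult_l C_Ring c f n). Qed.

Lemma sum_n_Cplus (f g : nat -> C) (n : nat) :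
  sum_n (fun k => f k + g k)%C n = (sum_n f n + sum_n g n)%C.
Proof. exact (sum_n_plus f g n). Qed.

(* Over [C], [sum_n] is typed in [AbelianMonoid.sort C_AbelianMonoid], where [ring] and [field]
   fail; this variant states the termwise equations in [C]. *)
Lemma sum_n_ext_loc_C (f g : nat -> C) (n : nat) :
  (forall k, (k <= n)%nat -> f k = g k) -> sum_n f n = sum_n g n.
Proof. apply sum_n_ext_loc. Qed.

Lemma gbinom_S_mul (s : C) (r : nat) :
  (gbinom s (S r) * RtoC (INR r + 1))%C = (gbinom s r * (s + RtoC (INR r)))%C.
Proof. simpl. pose proof (pos_INR r). field. apply RtoC_neq0. lra. Qed.

(* Both sides satisfy (n+1) c_(n+1) = (s + s' + n) c_n: split the weight n+1 as k + (n+1-k). *)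
Lemma gbinom_vandermonde (s s' : C) (n : nat) :
  @eq C (sum_n (fun k => gbinom s k * gbinom s' (n - k))%C n) (gbinom (s + s') n).
Proof.
  induction n as [|n IH]; [rewrite sum_O; simpl; ring|].
  set (a := gbinom s). set (b := gbinom s').
  assert (Hleft : sum_n (fun k => RtoC (INR k) * (a k * b (S n - k)%nat))%C (S n)
                  = sum_n (fun k => (s + RtoC (INR k)) * (a k * b (n - k)%nat))%C n).
  { rewrite sum_n_shift. change (plus ?x ?y) with (Cplus x y).
    simpl (INR 0). rewrite Cmult_0_l, Cplus_0_l.
    apply sum_n_ext_loc_C. intros k _. simpl (S n - S k)%nat. rewrite S_INR.
    unfold a. transitivity (gbinom s (S k) * RtoC (INR k + 1) * b (n - k)%nat)%C; [ring|].
    rewrite gbinom_S_mul. ring. }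
  assert (Hright : sum_n (fun k => RtoC (INR (S n - k)) * (a k * b (S n - k)%nat))%C (S n)
                   = sum_n (fun k => (s' + RtoC (INR (n - k))) * (a k * b (n - k)%nat))%C n).
  { rewrite sum_Sn. change (plus ?x ?y) with (Cplus x y).
    rewrite Nat.sub_diag. simpl (INR 0). rewrite Cmult_0_l, Cplus_0_r.
    apply sum_n_ext_loc_C. intros k Hk. replace (S n - k)%nat with (S (n - k)) by lia.
    rewrite S_INR. unfold b.
    transitivity (a k * (gbinom s' (S (n - k)) * RtoC (INR (n - k) + 1)))%C; [ring|].
    rewrite gbinom_S_mul. ring. }
  assert (Hsum : (RtoC (INR n + 1) * sum_n (fun k => a k * b (S n - k)%nat)%C (S n))%C
                 = ((s + s' + RtoC (INR n)) * gbinom (s + s') n)%C).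
  { rewrite <- IH, <- !sum_n_Cmult_l.
    rewrite (sum_n_ext_loc_C _ (fun k => RtoC (INR k) * (a k * b (S n - k)%nat)
                                  + RtoC (INR (S n - k)) * (a k * b (S n - k)%nat))%C).
    2: { intros k Hk. rewrite <- Cmult_plus_distr_r, <- RtoC_plus, <- plus_INR.
         replace (k + (S n - k))%nat with (S n) by lia. rewrite S_INR. reflexivity. }
    rewrite sum_n_Cplus, Hleft, Hright, <- sum_n_Cplus.
    apply sum_n_ext_loc_C. intros k Hk.
    replace (INR n) with (INR k + INR (n - k)) by (rewrite <- plus_INR; f_equal; lia).
    rewrite RtoC_plus. unfold a, b. ring. }
  assert (Hn1 : RtoC (INR n + 1) <> 0%C) by (apply RtoC_neq0; pose proof (pos_INR n); lra).
  revert Hsum. generalize (sum_n (fun k => a k * b (S n - k)%nat)%C (S n)).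
  intros c Hsum. change C in c.
  transitivity (RtoC (INR n + 1) * c / RtoC (INR n + 1))%C; [field; exact Hn1|].
  rewrite Hsum. simpl. field. exact Hn1.
Qed.

Definition binom_series (s : C) (x : R) : C :=
  CSeries (fun r => gbinom s r * RtoC (x ^ r))%C.

Lemma ex_series_Cmod_binom (s : C) (x : R) :
  0 <= x < 1 -> ex_series (fun r => Cmod (gbinom s r * RtoC (x ^ r))).
Proof.
  intros Hx.
  apply (ex_series_le (fun r => Cmod (gbinom s r * RtoC (x ^ r))) (fun r => gbinomR (Cmod s) r * x ^ r));
    [|apply ex_series_gbinomR; [apply Cmod_ge_0 | exact Hx]].
  intros r. change (Rabs (Cmod (gbinom s r * RtoC (x ^ r))) <= gbinomR (Cmod s) r * x ^ r).
  rewrite Rabs_pos_eq by apply Cmod_ge_0.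
  rewrite Cmod_mult, Cmod_R, Rabs_pos_eq by (apply pow_le; lra).
  apply Rmult_le_compat_r; [apply pow_le; lra | apply Cmod_gbinom_le].
Qed.

Lemma gbinom_conj (s : C) (r : nat) : gbinom (Cconj s) r = Cconj (gbinom s r).
Proof.
  induction r as [|r IH]; simpl.
  - apply injective_projections; simpl; ring.
  - pose proof (pos_INR r).
    rewrite Cdiv_conj by (apply RtoC_neq0; lra).
    rewrite Cmult_conj, Cplus_conj, IH.
    f_equal; [f_equal; f_equal|]; apply injective_projections; simpl; ring.
Qed.

Lemma Re_mul_conj (z w : C) : Re (z * Cconj w) = Re z * Re w + Im z * Im w.
Proof. destruct z, w; unfold Cmult, Cconj; simpl; ring. Qed.

Lemma Re_sum_n (f : nat -> C) (n : nat) : Re (sum_n f n) = sum_f_R0 (fun k => Re (f k)) n.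
Proof.
  induction n as [|n IH]; [rewrite sum_O; reflexivity|].
  rewrite sum_Sn. simpl. rewrite <- IH. reflexivity.
Qed.

(* Cauchy product of the real and imaginary parts, then Vandermonde with [s] and its conjugate. *)
Lemma Cmod_binom_series_sqr (s : C) (x : R) :
  0 <= x < 1 ->
  Cmod (binom_series s x) ^ 2 = Series (fun n => Re (gbinom (s + Cconj s) n) * x ^ n).
Proof.
  intros Hx.
  set (f := fun r => (gbinom s r * RtoC (x ^ r))%C).
  assert (Hf : ex_series (fun n => Cmod (f n))) by (apply ex_series_Cmod_binom; exact Hx).
  assert (Habs_re : ex_series (fun n => Rabs (Re (f n)))).
  { apply (ex_series_le (fun n => Rabs (Re (f n))) (fun n => Cmod (f n))); auto.
    intros n. change (Rabs (Rabs (Re (f n))) <= Cmod (f n)). rewrite Rabs_Rabsolu. apply re_le_Cmod. }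
  assert (Habs_im : ex_series (fun n => Rabs (Im (f n)))).
  { apply (ex_series_le (fun n => Rabs (Im (f n))) (fun n => Cmod (f n))); auto.
    intros n. change (Rabs (Rabs (Im (f n))) <= Cmod (f n)). rewrite Rabs_Rabsolu. apply im_le_Cmod. }
  pose proof (Series_correct _ (ex_series_Re f Hf)) as Hre.
  pose proof (Series_correct _ (ex_series_Im f Hf)) as Him.
  pose proof (is_series_mult _ _ _ _ Hre Hre Habs_re Habs_re) as Hre2.
  pose proof (is_series_mult _ _ _ _ Him Him Habs_im Habs_im) as Him2.
  rewrite Cmod2_alt.
  change (Series (fun n => Re (f n)) ^ 2 + Series (fun n => Im (f n)) ^ 2
          = Series (fun n => Re (gbinom (s + Cconj s) n) * x ^ n)).
  rewrite <- !Rsqr_pow2. unfold Rsqr.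
  rewrite <- (is_series_unique _ _ Hre2), <- (is_series_unique _ _ Him2).
  rewrite <- Series_plus by (eexists; eauto).
  apply Series_ext. intros n.
  rewrite <- gbinom_vandermonde, Re_sum_n, <- plus_sum, Rmult_comm, scal_sum.
  apply sum_eq. intros k Hk.
  rewrite gbinom_conj, Re_mul_conj. unfold f. rewrite !Re_mul_RtoC, !Im_mul_RtoC.
  replace (x ^ n) with (x ^ k * x ^ (n - k)) by (rewrite <- pow_add; f_equal; lia).
  ring.
Qed.

Lemma Cmod_binom_series_le (s : C) (x q : R) :
  0 <= x <= q -> q < 1 ->
  Cmod (binom_series s x) <= sqrt (Series (fun n => gbinomR (2 * Rabs (Re s)) n * q ^ n)).
Proof.
  intros Hx Hq.
  assert (Hconj : Cmod (s + Cconj s) = 2 * Rabs (Re s)).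
  { replace (s + Cconj s)%C with (RtoC (2 * Re s))
      by (destruct s; apply injective_projections; simpl; ring).
    rewrite Cmod_R, Rabs_mult, Rabs_pos_eq by lra. reflexivity. }
  rewrite <- (sqrt_pow2 (Cmod (binom_series s x))) by apply Cmod_ge_0.
  apply sqrt_le_1_alt. rewrite Cmod_binom_series_sqr by lra.
  eapply Rle_trans; [apply Rle_abs|]. apply Rabs_Series_le.
  - intros n. rewrite Rabs_mult, (Rabs_pos_eq (x ^ n)) by (apply pow_le; lra).
    apply Rmult_le_compat; [apply Rabs_pos | apply pow_le; lra | | apply pow_incr; lra].
    rewrite <- Hconj. eapply Rle_trans; [apply re_le_Cmod | apply Cmod_gbinom_le].
  - apply ex_series_gbinomR; [apply Rmult_le_pos; [lra | apply Rabs_pos] | lra].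
Qed.

(** * The Dirichlet series *)

Lemma qint_S_bounds (q : R) (n : nat) : 0 < q < 1 -> 1 <= qint q (S n) <= / (1 - q).
Proof.
  intros Hq. unfold qint. pose proof (pow_le q n ltac:(lra)).
  assert (q ^ n <= 1) by (rewrite <- (pow1 n); apply pow_incr; lra).
  simpl. split.
  - apply Rle_div_r; nra.
  - unfold Rdiv. rewrite <- (Rmult_1_l (/ (1 - q))) at 2.
    apply Rmult_le_compat_r; [left; apply Rinv_0_lt_compat|]; nra.
Qed.

Lemma Cmod_rpow_neg_qint_le (q : R) (s : C) (n : nat) :
  0 < q < 1 -> Cmod (rpow_neg (qint q (S n)) s) <= exp (Rabs (Re s) * - ln (1 - q)).
Proof.
  intros Hq. destruct (qint_S_bounds q n Hq) as [Hlo Hhi].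
  unfold rpow_neg. rewrite Cmod_cexp. apply exp_le_exp.
  assert (Hln0 : 0 <= ln (qint q (S n))) by (rewrite <- ln_1; apply ln_le; lra).
  assert (Hln1 : ln (qint q (S n)) <= - ln (1 - q))
    by (rewrite <- ln_Rinv by lra; apply ln_le; lra).
  replace (Re (- (RtoC (ln (qint q (S n))) * s))) with (- (ln (qint q (S n)) * Re s))
    by (destruct s; simpl; ring).
  destruct (Rle_dec 0 (Re s)).
  - rewrite Rabs_pos_eq by assumption. nra.
  - rewrite Rabs_left by lra. nra.
Qed.

Lemma Cmod_zeta_q_dirichlet_le (q : R) (s t : C) :
  0 < q < 1 -> 0 < Re t ->
  Cmod (zeta_q_dirichlet q s t)
  <= 2 * (exp (Rabs (Re s) * - ln (1 - q))
          * (exp (ln q * Re t) / (1 - exp (ln q * Re t)))).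
Proof.
  intros Hq Ht.
  set (rho := exp (ln q * Re t)). set (E := exp (Rabs (Re s) * - ln (1 - q))).
  assert (Hrho : 0 < rho < 1).
  { split; [apply exp_pos|]. unfold rho. rewrite <- exp_0. apply exp_increasing.
    pose proof (ln_neg_of_lt1 q Hq). nra. }
  replace (E * (rho / (1 - rho))) with (Series (fun n => E * rho * rho ^ n))
    by (rewrite Series_scal_geom by lra; field; lra).
  apply Cmod_CSeries_le; [|apply ex_series_scal_geom; lra].
  intros n. rewrite Cmod_mult, Cmod_qpow, Re_RtoC_mul.
  replace (E * rho * rho ^ n) with (rho ^ S n * E) by (simpl; ring).
  apply Rmult_le_compat; [left; apply exp_pos | apply Cmod_ge_0 | |].
  - unfold rho. rewrite pow_exp_ln, ln_exp by apply exp_pos. right. f_equal. ring.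
  - apply Cmod_rpow_neg_qint_le, Hq.
Qed.

Lemma zeta_q_bound_pos (q sigma tau : R) :
  0 < q < 1 -> 0 < tau ->
  exists C0 : R, 0 < C0 /\
    forall (v : R) (t : C), Re t = tau -> Cmod (zeta_q q (sigma, v) t) <= C0.
Proof.
  intros Hq Htau.
  set (rho := exp (ln q * tau)).
  assert (Hrho : 0 < rho < 1).
  { split; [apply exp_pos|]. unfold rho. rewrite <- exp_0. apply exp_increasing.
    pose proof (ln_neg_of_lt1 q Hq). nra. }
  exists (2 * (exp (Rabs sigma * - ln (1 - q)) * (rho / (1 - rho))) + 1).
  split.
  - assert (0 < exp (Rabs sigma * - ln (1 - q)) * (rho / (1 - rho))).
    { apply Rmult_lt_0_compat; [apply exp_pos | apply Rdiv_lt_0_compat; lra]. }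
    lra.
  - intros v t Ht. unfold zeta_q. destruct (Rlt_dec 0 (Re t)); [|lra].
    eapply Rle_trans; [apply Cmod_zeta_q_dirichlet_le; assumption|].
    rewrite Ht. simpl (Re (sigma, v)). fold rho. lra.
Qed.

(** * The continuation *)

Section Continuation.

Variables (q eps : R) (s t : C).
Hypothesis Hq : 0 < q < 1.
Hypothesis Heps : 0 < eps.
Hypothesis Ht : Re t <= 0.
Hypothesis Hsep : forall r : nat, eps <= Cmod (1 - qpow q (t + RtoC (INR r)))%C.

Let y (r : nat) : C := qpow q (t + RtoC (INR r)).
Let rho : R := Cmod (qpow q t).
Let K : R := sqrt (Series (fun n => gbinomR (2 * Rabs (Re s)) n * q ^ n)).

Definition cont_term (k r : nat) : C := (gbinom s r * Cpow (y r) k / (1 - y r))%C.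

Lemma one_sub_y_neq0 (r : nat) : (1 - y r)%C <> 0%C.
Proof. intros E. pose proof (Hsep r) as H. fold (y r) in H. rewrite E, Cmod_0 in H. lra. Qed.

Lemma one_le_rho : 1 <= rho.
Proof.
  unfold rho. rewrite Cmod_qpow, <- exp_0. apply exp_le_exp.
  pose proof (ln_neg_of_lt1 q Hq). nra.
Qed.

Lemma Cmod_Cpow_y (k r : nat) : Cmod (Cpow (y r) k) = rho ^ k * (q ^ k) ^ r.
Proof.
  unfold y. rewrite Cmod_pow, qpow_add_nat, Cmod_mult, Cmod_R, Rabs_pos_eq by (try apply pow_le; lra).
  rewrite Rpow_mult_distr, <- !pow_mult, Nat.mul_comm. reflexivity.
Qed.

Lemma pow_q_lt1 (k : nat) : (1 <= k)%nat -> 0 <= q ^ k < 1.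
Proof. intros Hk. apply pow_lt_1_compat; [lra | lia]. Qed.

Lemma Cmod_cont_term_le (k r : nat) :
  Cmod (cont_term k r) <= rho ^ k / eps * (gbinomR (Cmod s) r * (q ^ k) ^ r).
Proof.
  pose proof (Hsep r) as Hr. fold (y r) in Hr.
  unfold cont_term. rewrite Cmod_div by apply one_sub_y_neq0.
  rewrite Cmod_mult, Cmod_Cpow_y.
  assert (0 <= rho ^ k * (q ^ k) ^ r)
    by (apply Rmult_le_pos; apply pow_le; [pose proof one_le_rho; lra | apply pow_le; lra]).
  apply Rle_trans with (gbinomR (Cmod s) r * (rho ^ k * (q ^ k) ^ r) / eps).
  - apply Rmult_le_compat.
    + apply Rmult_le_pos; [apply Cmod_ge_0 | assumption].
    + left. apply Rinv_0_lt_compat. lra.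
    + apply Rmult_le_compat_r; [assumption | apply Cmod_gbinom_le].
    + apply Rinv_le_contravar; assumption.
  - right. field. lra.
Qed.

Lemma ex_series_Cmod_cont_term (k : nat) :
  (1 <= k)%nat -> ex_series (fun r => Cmod (cont_term k r)).
Proof.
  intros Hk.
  apply (ex_series_le (fun r => Cmod (cont_term k r))
                      (fun r => rho ^ k / eps * (gbinomR (Cmod s) r * (q ^ k) ^ r))).
  - intros r. change (Rabs (Cmod (cont_term k r)) <= rho ^ k / eps * (gbinomR (Cmod s) r * (q ^ k) ^ r)).
    rewrite Rabs_pos_eq by apply Cmod_ge_0. apply Cmod_cont_term_le.
  - apply (ex_series_scal_l (rho ^ k / eps) (fun r => gbinomR (Cmod s) r * (q ^ k) ^ r)).
    apply ex_series_gbinomR; [apply Cmod_ge_0 | apply pow_q_lt1, Hk].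
Qed.

(* y^k/(1-y) = y^k + y^(k+1)/(1-y), and y_r^k = q^(kt) (q^k)^r. *)
Lemma CSeries_cont_term_S (k : nat) :
  (1 <= k)%nat ->
  CSeries (cont_term k)
  = (Cpow (qpow q t) k * binom_series s (q ^ k) + CSeries (cont_term (S k)))%C.
Proof.
  intros Hk.
  assert (Hbin := ex_series_Cmod_binom s (q ^ k) (pow_q_lt1 k Hk)).
  unfold binom_series. rewrite <- CSeries_scal_l by exact Hbin.
  rewrite <- CSeries_plus;
    [| apply ex_series_Cmod_scal_l, Hbin | apply ex_series_Cmod_cont_term; lia].
  apply CSeries_ext. intros r. unfold cont_term.
  assert (Hyk : Cpow (y r) k = (Cpow (qpow q t) k * RtoC ((q ^ k) ^ r))%C).
  { unfold y. rewrite qpow_add_nat, Cpow_mult_l, <- RtoC_pow, <- !pow_mult, Nat.mul_comm by lra.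
    reflexivity. }
  rewrite Cpow_S, Hyk. field. apply one_sub_y_neq0.
Qed.

Lemma Cmod_layer_le (k : nat) :
  (1 <= k)%nat -> Cmod (Cpow (qpow q t) k * binom_series s (q ^ k))%C <= rho ^ k * K.
Proof.
  intros Hk. pose proof (pow_q_lt1 k Hk).
  rewrite Cmod_mult, Cmod_pow. apply Rmult_le_compat_l.
  - apply pow_le, Cmod_ge_0.
  - apply Cmod_binom_series_le; [split; [lra|] | lra].
    destruct k as [|k]; [lia|].
    assert (q ^ k <= 1) by (rewrite <- (pow1 k); apply pow_incr; lra).
    pose proof (pow_le q k ltac:(lra)). simpl. nra.
Qed.

Lemma Cmod_CSeries_cont_term_le (M : nat) :
  Cmod (CSeries (cont_term 1)) <= INR M * rho ^ M * K + Cmod (CSeries (cont_term (S M))).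
Proof.
  induction M as [|M IH]; [simpl; lra|].
  rewrite (CSeries_cont_term_S (S M)) in IH by lia.
  pose proof (Cmod_triangle (Cpow (qpow q t) (S M) * binom_series s (q ^ S M))
                (CSeries (cont_term (S (S M))))).
  pose proof (Cmod_layer_le (S M) ltac:(lia)).
  assert (HK : 0 <= K) by apply sqrt_pos.
  assert (Hpow : rho ^ M <= rho ^ S M).
  { pose proof one_le_rho. pose proof (pow_le rho M ltac:(lra)). simpl. nra. }
  assert (INR M * rho ^ M * K <= INR M * rho ^ S M * K).
  { apply Rmult_le_compat_r; [exact HK|]. apply Rmult_le_compat_l; [apply pos_INR | exact Hpow]. }
  rewrite S_INR. lra.
Qed.

Lemma Cmod_CSeries_cont_tail_le (M : nat) :
  q ^ S M * (Cmod s + 1) <= 1 / 2 ->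
  Cmod (CSeries (cont_term (S M))) <= 4 * rho ^ S M / eps.
Proof.
  intros HM.
  assert (Hc : 0 <= rho ^ S M / eps)
    by (apply Rdiv_le_0_compat; [apply pow_le; pose proof one_le_rho; lra | exact Heps]).
  eapply Rle_trans.
  - apply (Cmod_CSeries_le _ (fun r => rho ^ S M / eps * (1 / 2) ^ r));
      [|apply ex_series_scal_geom; lra].
    intros r. eapply Rle_trans; [apply Cmod_cont_term_le|].
    apply Rmult_le_compat_l; [exact Hc|].
    apply gbinomR_pow_le_half_pow; [apply Cmod_ge_0 | apply pow_le; lra | lra].
  - rewrite Series_scal_geom by lra. right. field. lra.
Qed.

Lemma Cmod_cont_series_le (M : nat) :
  q ^ S M * (Cmod s + 1) <= 1 / 2 ->
  Cmod (CSeries (fun r => gbinom s r * y r / (1 - y r))%C)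
  <= (INR M + 1) * (K + 4 / eps) * rho ^ S M.
Proof.
  intros HM.
  rewrite (CSeries_ext _ (cont_term 1)) by (intros r; unfold cont_term; rewrite Cpow_1_r; reflexivity).
  eapply Rle_trans; [apply (Cmod_CSeries_cont_term_le M)|].
  pose proof (Cmod_CSeries_cont_tail_le M HM).
  assert (HK : 0 <= K) by apply sqrt_pos.
  pose proof one_le_rho.
  assert (Hrho : 0 <= rho ^ M <= rho ^ S M).
  { pose proof (pow_le rho M ltac:(lra)). simpl. nra. }
  assert (0 <= 4 / eps) by (apply Rdiv_le_0_compat; lra).
  pose proof (pos_INR M).
  assert (INR M * rho ^ M * K <= INR M * rho ^ S M * K).
  { apply Rmult_le_compat_r; [exact HK|]. apply Rmult_le_compat_l; lra. }
  assert (0 <= INR M * (4 / eps) * rho ^ S M + K * rho ^ S M).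
  { assert (0 <= INR M * (4 / eps)) by (apply Rmult_le_pos; lra).
    apply Rplus_le_le_0_compat; apply Rmult_le_pos; lra. }
  replace (4 * rho ^ S M / eps) with (4 / eps * rho ^ S M) in * by (field; lra).
  replace ((INR M + 1) * (K + 4 / eps) * rho ^ S M)
    with (INR M * rho ^ S M * K + 4 / eps * rho ^ S M
          + (INR M * (4 / eps) * rho ^ S M + K * rho ^ S M)) by ring.
  lra.
Qed.

(* Peel M = floor (log (2 (|s|+1)) / log (1/q)) layers: then q^(M+1) (|s|+1) <= 1/2 makes the
   tail geometric, while |q^t|^(M+1) <= (2 (|s|+1) / q)^(-Re t). *)
Lemma Cmod_zeta_q_cont_le :
  Cmod (zeta_q_cont q s t)
  <= exp (Re s * ln (1 - q))
     * (sqrt (Series (fun n => gbinomR (2 * Rabs (Re s)) n * q ^ n)) + 4 / eps)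
     * (ln (2 * (Cmod s + 1)) / - ln q + 1)
     * exp (- Re t * (ln (2 * (Cmod s + 1)) + - ln q)).
Proof.
  fold K. set (L := ln (2 * (Cmod s + 1))). set (lam := - ln q).
  pose proof (Cmod_ge_0 s).
  assert (Hlam : 0 < lam) by (pose proof (ln_neg_of_lt1 q Hq); unfold lam; lra).
  assert (HL : 0 <= L) by (unfold L; rewrite <- ln_1; apply ln_le; lra).
  destruct (nfloor_ex (L / lam)) as [M [HM1 HM2]]; [apply Rdiv_le_0_compat; lra|].
  assert (HSM : L < INR (S M) * lam <= L + lam).
  { rewrite S_INR. split.
    - apply Rlt_div_l in HM2; lra.
    - apply Rle_div_r in HM1; lra. }
  assert (Hlayers : q ^ S M * (Cmod s + 1) <= 1 / 2).
  { assert (q ^ S M * (2 * (Cmod s + 1)) < 1).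
    { replace (q ^ S M * (2 * (Cmod s + 1))) with (exp (INR (S M) * ln q + L))
        by (rewrite exp_plus, <- pow_exp_ln by lra; unfold L; rewrite exp_ln by lra; reflexivity).
      rewrite <- exp_0. apply exp_increasing. unfold lam in HSM. lra. }
    lra. }
  assert (Hrho : rho ^ S M <= exp (- Re t * (L + lam))).
  { unfold rho. rewrite Cmod_qpow, pow_exp_ln, ln_exp by apply exp_pos.
    apply exp_le_exp.
    replace (INR (S M) * (ln q * Re t)) with (- Re t * (INR (S M) * lam)) by (unfold lam; ring).
    apply Rmult_le_compat_l; lra. }
  unfold zeta_q_cont. rewrite Cmod_mult, Cmod_cexp, Re_mul_RtoC.
  rewrite !Rmult_assoc. apply Rmult_le_compat_l; [left; apply exp_pos|].
  eapply Rle_trans; [apply (Cmod_cont_series_le M Hlayers)|].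
  assert (HK : 0 <= K) by apply sqrt_pos.
  assert (0 <= 4 / eps) by (apply Rdiv_le_0_compat; lra).
  rewrite (Rmult_comm (INR M + 1)), Rmult_assoc.
  apply Rmult_le_compat_l; [lra|].
  apply Rmult_le_compat; [pose proof (pos_INR M); lra | apply pow_le; pose proof one_le_rho; lra | |].
  - fold lam. apply Rplus_le_compat_r. exact HM1.
  - exact Hrho.
Qed.

End Continuation.

(** * Growth in the imaginary direction *)

Lemma ln_two_Cmod_succ_le (sigma v : R) :
  ln (2 * (Cmod (sigma, v) + 1)) <= ln (2 * Rabs sigma + 6) + Rabs v / 2.
Proof.
  pose proof (Cmod_le_Re_Im (sigma, v)) as Hs. simpl in Hs.
  pose proof (Cmod_ge_0 (sigma, v)). pose proof (Rabs_pos sigma). pose proof (Rabs_pos v).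
  pose proof (exp_ineq1_le (Rabs v / 2)).
  rewrite <- (ln_exp (Rabs v / 2)). rewrite <- ln_mult by (try apply exp_pos; lra).
  apply ln_le; [lra|]. nra.
Qed.

Lemma log_growth_le (L A lam tau w : R) :
  0 < lam -> 0 <= A -> 0 <= L -> tau <= 0 -> 0 <= w -> L <= A + w / 2 ->
  (L / lam + 1) * exp (- tau * (L + lam))
  <= ((A + 1 / 2) / lam + 1) * (exp (- tau * (A + lam)) * ((1 + w) * exp (- tau * w / 2))).
Proof.
  intros Hlam HA HL Htau Hw HLA.
  assert (Hinv : 0 < / lam) by (apply Rinv_0_lt_compat; lra).
  assert (Hfac : L / lam + 1 <= ((A + 1 / 2) / lam + 1) * (1 + w)).
  { unfold Rdiv. apply Rle_trans with ((A + w / 2) * / lam + 1).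
    - apply Rplus_le_compat_r, Rmult_le_compat_r; lra.
    - assert (0 <= w * A * / lam) by (apply Rmult_le_pos; [apply Rmult_le_pos|]; lra).
      nra. }
  assert (Hexp : exp (- tau * (L + lam)) <= exp (- tau * (A + lam)) * exp (- tau * w / 2)).
  { rewrite <- exp_plus. apply exp_le_exp.
    assert (0 <= - tau * (A + w / 2 - L)) by (apply Rmult_le_pos; lra). lra. }
  replace (((A + 1 / 2) / lam + 1) * (exp (- tau * (A + lam)) * ((1 + w) * exp (- tau * w / 2))))
    with ((((A + 1 / 2) / lam + 1) * (1 + w)) * (exp (- tau * (A + lam)) * exp (- tau * w / 2)))
    by ring.
  apply Rmult_le_compat; [| left; apply exp_pos | exact Hfac | exact Hexp].
  assert (0 <= L / lam) by (apply Rdiv_le_0_compat; lra). lra.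
Qed.

Lemma zeta_q_nonpos (q : R) (s t : C) : Re t <= 0 -> zeta_q q s t = zeta_q_cont q s t.
Proof. intros Ht. unfold zeta_q. destruct (Rlt_dec 0 (Re t)); [lra | reflexivity]. Qed.

Lemma zeta_q_nonpos_growth (eps q sigma tau : R) :
  0 < eps -> 0 < q < 1 -> tau <= 0 ->
  exists C0 : R, 0 < C0 /\
    forall (v : R) (t : C), Re t = tau ->
      (forall r : nat, eps <= Cmod (1 - qpow q (t + RtoC (INR r)))%C) ->
      Cmod (zeta_q q (sigma, v) t) <= C0 * (1 + Rabs v) * exp (- tau * Rabs v / 2).
Proof.
  intros Heps Hq Htau.
  set (lam := - ln q). set (A := ln (2 * Rabs sigma + 6)).
  set (K := sqrt (Series (fun n => gbinomR (2 * Rabs sigma) n * q ^ n))).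
  assert (Hlam : 0 < lam) by (pose proof (ln_neg_of_lt1 q Hq); unfold lam; lra).
  assert (HA : 0 <= A).
  { unfold A. rewrite <- ln_1. apply ln_le; [lra|]. pose proof (Rabs_pos sigma). lra. }
  assert (HK : 0 < K + 4 / eps).
  { assert (0 <= K) by apply sqrt_pos. assert (0 < 4 / eps) by (apply Rdiv_lt_0_compat; lra).
    lra. }
  assert (Hc : 0 < (A + 1 / 2) / lam + 1).
  { assert (0 <= (A + 1 / 2) / lam) by (apply Rdiv_le_0_compat; lra). lra. }
  exists (exp (sigma * ln (1 - q)) * (K + 4 / eps) * ((A + 1 / 2) / lam + 1)
          * exp (- tau * (A + lam))).
  split; [repeat apply Rmult_lt_0_compat; try apply exp_pos; assumption|].
  intros v t Ht Hsep.
  rewrite zeta_q_nonpos by lra.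
  eapply Rle_trans; [apply (Cmod_zeta_q_cont_le q eps); auto; lra|].
  simpl (Re (sigma, v)). rewrite Ht. fold lam K.
  rewrite !Rmult_assoc.
  apply Rmult_le_compat_l; [left; apply exp_pos|].
  apply Rmult_le_compat_l; [lra|].
  apply log_growth_le; auto; [| apply Rabs_pos | apply ln_two_Cmod_succ_le].
  rewrite <- ln_1. apply ln_le; [lra|]. pose proof (Cmod_ge_0 (sigma, v)). lra.
Qed.

Lemma zeta_q_bound_zero (eps q sigma : R) :
  0 < eps -> 0 < q < 1 ->
  exists C0 : R, 0 < C0 /\
    forall (v : R) (t : C), 1 <= Rabs v -> Re t = 0 ->
      (forall r : nat, eps <= Cmod (1 - qpow q (t + RtoC (INR r)))%C) ->
      Cmod (zeta_q q (sigma, v) t) <= C0 * Rabs v.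
Proof.
  intros Heps Hq.
  destruct (zeta_q_nonpos_growth eps q sigma 0 Heps Hq (Rle_refl 0)) as [C0 [HC0 Hgrowth]].
  exists (2 * C0). split; [lra|].
  intros v t Hv Ht Hsep.
  eapply Rle_trans; [apply Hgrowth; assumption|].
  replace (- 0 * Rabs v / 2) with 0 by field. rewrite exp_0. nra.
Qed.

Lemma zeta_q_bound_neg (eps q sigma tau : R) :
  0 < eps -> 0 < q < 1 -> tau < 0 ->
  exists C0 : R, 0 < C0 /\
    forall (v : R) (t : C), Re t = tau ->
      (forall r : nat, eps <= Cmod (1 - qpow q (t + RtoC (INR r)))%C) ->
      Cmod (zeta_q q (sigma, v) t) <= C0 * exp (- tau * (1 + PI / 2) * Rabs v).
Proof.
  intros Heps Hq Htau.
  destruct (zeta_q_nonpos_growth eps q sigma tau Heps Hq (Rlt_le _ _ Htau)) as [C0 [HC0 Hgrowth]].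
  set (T := - tau).
  assert (HT : 0 < T) by (unfold T; lra).
  exists (C0 * (1 + 2 / T)).
  split; [apply Rmult_lt_0_compat; [|assert (0 < 2 / T) by (apply Rdiv_lt_0_compat; lra)]; lra|].
  intros v t Ht Hsep.
  eapply Rle_trans; [apply Hgrowth; assumption|]. fold T.
  pose proof (Rabs_pos v).
  assert (Hlin : 1 + Rabs v <= (1 + 2 / T) * exp (T / 2 * Rabs v)).
  { replace (2 / T) with (1 / (T / 2)) by (field; lra).
    rewrite <- (Rmult_1_l (Rabs v)) at 1. apply affine_le_exp; lra. }
  assert (Hexp : exp (T / 2 * Rabs v) * exp (T * Rabs v / 2) <= exp (T * (1 + PI / 2) * Rabs v)).
  { rewrite <- exp_plus. apply exp_le_exp. pose proof PI_RGT_0.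
    assert (0 <= T * PI * Rabs v) by (apply Rmult_le_pos; [apply Rmult_le_pos|]; lra).
    lra. }
  rewrite Rmult_assoc, Rmult_assoc. apply Rmult_le_compat_l; [lra|].
  eapply Rle_trans; [apply Rmult_le_compat_r; [left; apply exp_pos | exact Hlin]|].
  rewrite Rmult_assoc. apply Rmult_le_compat_l; [|exact Hexp].
  assert (0 < 2 / T) by (apply Rdiv_lt_0_compat; lra). lra.
Qed.

Theorem theorem1p1 (eps q sigma tau : R) :
  0 < eps -> 0 < q < 1 ->
  exists C0 V0 : R, 0 < C0 /\ 0 < V0 /\
    forall (v : R) (t : C),
      V0 <= Rabs v ->
      Re t = tau ->
      (exists delta : R, eps < delta /\
         forall r : nat, delta <= Cmod (1 - qpow q (t + RtoC (INR r)))%C) ->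
      (0 < tau -> Cmod (zeta_q q (sigma, v) t) <= C0) /\
      (tau = 0 -> Cmod (zeta_q q (sigma, v) t) <= C0 * Rabs v) /\
      (tau < 0 -> Cmod (zeta_q q (sigma, v) t)
                    <= C0 * exp (- tau * (1 + PI / 2) * Rabs v)).
Proof.
  intros Heps Hq.
  assert (Hsep : forall t, (exists delta : R, eps < delta /\
            forall r : nat, delta <= Cmod (1 - qpow q (t + RtoC (INR r)))%C) ->
            forall r : nat, eps <= Cmod (1 - qpow q (t + RtoC (INR r)))%C).
  { intros t [delta [Hdelta Hr]] r. specialize (Hr r). lra. }
  destruct (Rtotal_order tau 0) as [Hneg | [Hzero | Hpos]].
  - destruct (zeta_q_bound_neg eps q sigma tau Heps Hq Hneg) as [C0 [HC0 Hbound]].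
    exists C0, 1. split; [exact HC0|]. split; [lra|].
    intros v t _ Ht Hdelta. split; [lra|]. split; [lra|].
    intros _. apply Hbound; auto.
  - destruct (zeta_q_bound_zero eps q sigma Heps Hq) as [C0 [HC0 Hbound]].
    exists C0, 1. split; [exact HC0|]. split; [lra|].
    intros v t Hv Ht Hdelta. split; [lra|]. split; [|lra].
    intros _. apply Hbound; auto. congruence.
  - destruct (zeta_q_bound_pos q sigma tau Hq Hpos) as [C0 [HC0 Hbound]].
    exists C0, 1. split; [exact HC0|]. split; [lra|].
    intros v t _ Ht _. split; [|lra].
    intros _. apply Hbound, Ht.
Qed.
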